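(* Let $K$ be a CM field with maximal totally real subfield $F$, and let $\pi\in K$ with $K=\mathbb{Q}(\pi)$ such that $\mathcal{O}_F[\pi]$ is an order of $K$. Let $\mathfrak{v}\subseteq\mathcal{O}_F$ be an ideal dividing $\mathfrak{f}^+(\mathcal{O}_F[\pi])$, and suppose $\mathfrak{v}$ is divisible by a prime power $\mathfrak{p}^k$ ($\mathfrak{p}\subseteq\mathcal{O}_F$ prime, $k\ge1$). Put $\mathfrak{f}_1^+=\mathfrak{p}^{k-1-v_{\mathfrak{p}}(\mathfrak{v})}\mathfrak{v}$ and $\mathfrak{f}_2^+=\mathfrak{p}^k$. Assume there is a relation $R$ which holds in $\mathcal{O}(\mathfrak{f}_1^+)$ but not in $\mathcal{O}(\mathfrak{f}_2^+)$. Then for every ideal $\mathfrak{f}^+\subseteq\mathcal{O}_F$ dividing $\mathfrak{v}$, we have $\mathfrak{p}^k\mid\mathfrak{f}^+$ if and only if $R$ does not hold in $\mathcal{O}(\mathfrak{f}^+)$.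
   Context: For an ideal $\mathfrak{f}^+\subseteq\mathcal{O}_F$, $\mathcal{O}(\mathfrak{f}^+)=\mathcal{O}_F+\mathfrak{f}^+\mathcal{O}_K$; this gives a bijection between ideals of $\mathcal{O}_F$ and orders of $K$ containing $\mathcal{O}_F$, whose inverse sends an order $\mathcal{O}$ to $\mathfrak{f}^+(\mathcal{O})=\mathfrak{f}\cap\mathcal{O}_F$, with $\mathfrak{f}=\{\alpha\in K:\alpha\mathcal{O}_K\subseteq\mathcal{O}\}$ the conductor ideal of $\mathcal{O}$. If $\mathcal{O}_1\subseteq\mathcal{O}_2$ are orders, the map $\mathfrak{a}\mapsto\mathfrak{a}\mathcal{O}_2$ induces a surjection $\mathrm{Cl}(\mathcal{O}_1)\to\mathrm{Cl}(\mathcal{O}_2)$ of (invertible-ideal) class groups. A relation is a tuple $(\mathfrak{a}_1,\dots,\mathfrak{a}_r)$ of invertible ideals of $\mathcal{O}_F[\pi]$; it holds in an order $\mathcal{O}\supseteq\mathcal{O}_F[\pi]$ if the product of the classes of $\mathfrak{a}_i\mathcal{O}$ is trivial in $\mathrm{Cl}(\mathcal{O})$. $v_{\mathfrak{p}}$ denotes the $\mathfrak{p}$-adic valuation. *)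

(* Number fields are modelled as L : fieldExtType rat;
   subsets of L (ideals, orders, fractional ideals) as predicates L -> Prop. *)
From HB Require Import structures.
From mathcomp Require Import all_boot all_order all_algebra all_field.
Set Implicit Arguments. Unset Strict Implicit. Unset Printing Implicit Defensive.
Import GRing.Theory Num.Theory.
Local Open Scope ring_scope.

Section Defs.
Variable L : fieldExtType rat.

Definition lset := L -> Prop.

Definition seteq (A B : lset) := forall x, A x <-> B x.

Definition addS (A B : lset) : lset :=
  fun x => exists a b, A a /\ B b /\ x = a + b.
Definition mulS (A B : lset) : lset :=
  fun x => exists s : seq (L * L),
    (forall ab, ab \in s -> A ab.1 /\ B ab.2) /\ x = \sum_(ab <- s) ab.1 * ab.2.

Definition is_integral (x : L) :=
  exists q : {poly int}, q \is monic /\ root (map_poly (fun z : int => z%:~R) q) x.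

Definition OKset : lset := is_integral.
Definition OF (F : {vspace L}) : lset := fun x => x \in F /\ is_integral x.

(* a subfield E is totally real if every embedding of L (equivalently of E)
   into the complex numbers maps E into the reals *)
Definition totally_real (E : {vspace L}) :=
  forall s : {rmorphism L -> algC}, forall x, x \in E -> s x \is Num.real.
Definition totally_imaginary :=
  forall s : {rmorphism L -> algC}, exists x, s x \isn't Num.real.

(* L is a CM field (a totally imaginary quadratic extension of the totally real
   field F) and F is its maximal totally real subfield *)
Definition CM_with_max_real (F : {subfield L}) :=
  [/\ totally_real F, totally_imaginary,
      \dim (fullv : {vspace L}) = (2 * \dim F)%N
    & forall E : {subfield L}, totally_real E -> (E <= F)%VS].

Definition is_subring (O : lset) :=
  [/\ O 1, (forall x y, O x -> O y -> O (x - y)) & (forall x y, O x -> O y -> O (x * y))].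

Definition is_order (O : lset) :=
  is_subring O /\
  exists s : seq L,
    (forall x, O x <-> exists c : seq int,
        size c = size s /\ x = \sum_(i < size s) (c`_i)%:~R * s`_i)
    /\ (<<s>>%VS = fullv).

Definition is_module (O A : lset) :=
  [/\ A 0, (forall x y, A x -> A y -> A (x + y)) & (forall r x, O r -> A x -> A (r * x))].

Definition is_ideal (O A : lset) := (forall x, A x -> O x) /\ is_module O A.

Definition is_prime (O P : lset) :=
  [/\ is_ideal O P, ~ P 1 & forall x y, O x -> O y -> P (x * y) -> P x \/ P y].

Definition divI (O A B : lset) := exists C, is_ideal O C /\ seteq B (mulS A C).

Fixpoint powS (O A : lset) (n : nat) : lset :=
  match n with 0 => O | n'.+1 => mulS A (powS O A n') end.

Definition invS (E : {vspace L}) (O A : lset) : lset :=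
  fun x => x \in E /\ forall y, A y -> O (x * y).

Definition powZ (E : {vspace L}) (O A : lset) (z : int) : lset :=
  match z with
  | Posz n => powS O A n
  | Negz n => powS O (invS E O A) n.+1
  end.

Definition pval (O P A : lset) (e : nat) :=
  divI O (powS O P e) A /\ ~ divI O (powS O P e.+1) A.

Definition OFpi (F : {vspace L}) (pi : L) : lset :=
  fun x => exists s : seq L, (forall c, c \in s -> OF F c) /\
                             x = \sum_(i < size s) s`_i * pi ^+ i.

(* f^+(O) = f ∩ O_F, f = conductor of O *)
Definition condplus (F : {vspace L}) (O : lset) : lset :=
  fun x => OF F x /\ forall y, OKset y -> O (x * y).

Definition Ord (F : {vspace L}) (f : lset) : lset := addS (OF F) (mulS f OKset).

Definition inv_ideal (O A : lset) :=
  [/\ is_module O A, (exists x, A x /\ x != 0)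
    & exists B, is_module O B /\ seteq (mulS A B) O].

(* the relation R = (a_1,...,a_r) holds in O: prod_i (a_i O) is principal *)
Definition rel_holds (O : lset) (R : seq lset) :=
  exists x, x != 0 /\
    seteq (foldr mulS O [seq mulS a O | a <- R]) (fun y => exists z, O z /\ y = x * z).

End Defs.

From HB Require Import structures.
From mathcomp Require Import all_boot all_order all_algebra all_field.
From mathcomp Require Import zify ring boolp.
From Stdlib Require List.
Import GRing.Theory Num.Theory.
Set Implicit Arguments. Unset Strict Implicit. Unset Printing Implicit Defensive.
Local Open Scope ring_scope.

(* A relation holding in an order holds in every larger order, so it suffices to
   compare orders.  If p^k | f then O(f) is contained in O(p^k), where R fails.
   Otherwise O(p^(k-1-e) v) is contained in O(f), where R holds, because
   p^-(e-k+1) v lies in f for e = v_p(v) >= k: writing v = f C and f = p^j f'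
   with j < k and p not dividing f', one gets p^(e-j) | C by cancelling powers
   of p.  Cancellation rests on p p^-1 = O_F, proved as for any Dedekind
   domain: integral elements form a ring (determinant trick), Z-submodules of
   O_F are finitely generated since O_F lies in the order O_F[pi], nonzero
   primes are maximal, and l O_F contains a product of primes above l. *)

Section Zmodules.
Variable V : zmodType.
Implicit Types S : V -> Prop.

Definition is_zmodule S :=
  [/\ S 0, forall x y, S x -> S y -> S (x + y) & forall x, S x -> S (- x)].

Lemma zmoduleB S x y : is_zmodule S -> S x -> S y -> S (x - y).
Proof. by case=> _ SD SN Sx Sy; apply: SD => //; apply: SN. Qed.

Lemma zmoduleMz S x z : is_zmodule S -> S x -> S (x *~ z).
Proof.
case=> S0 SD SN Sx; have Sxn n : S (x *+ n).
  by elim: n => [|n IH]; rewrite ?mulr0n // mulrS; apply: SD.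
by case: z => n; [apply: Sxn | rewrite NegzE mulrNz; apply: SN; apply: Sxn].
Qed.

Lemma zmodule_sum S (I : Type) (r : seq I) (P : pred I) (f : I -> V) :
  is_zmodule S -> (forall i, P i -> S (f i)) -> S (\sum_(i <- r | P i) f i).
Proof. by case=> S0 SD _ Sf; apply: big_ind. Qed.

End Zmodules.

Lemma ex_minn_prop (P : nat -> Prop) :
  (exists n, P n) -> exists2 n, P n & forall m, P m -> (n <= m)%N.
Proof.
move=> [n Pn]; have exP : exists n, `[< P n >] by exists n; apply/asboolP.
by case: (ex_minnP exP) => m /asboolP Pm minm; exists m => // k /asboolP /minm.
Qed.

Section SubsetArithmetic.
Variable L : fieldExtType rat.
Implicit Types A B C D O : lset L.

Definition subS A B := forall x, A x -> B x.
Definition add_closed A := A 0 /\ forall x y, A x -> A y -> A (x + y).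

Lemma seteq_refl A : seteq A A. Proof. by []. Qed.

Lemma seteq_sym A B : seteq A B -> seteq B A.
Proof. by move=> h x; split=> /h. Qed.

Lemma seteq_trans A B C : seteq A B -> seteq B C -> seteq A C.
Proof. by move=> h1 h2 x; split=> [/h1/h2|/h2/h1]. Qed.

Lemma seteq_sub A B : seteq A B -> subS A B.
Proof. by move=> h x /h. Qed.

Lemma subS_anti A B : subS A B -> subS B A -> seteq A B.
Proof. by move=> h1 h2 x; split=> [/h1|/h2]. Qed.

Lemma mulS_mul A B a b : A a -> B b -> mulS A B (a * b).
Proof.
move=> ha hb; exists [:: (a, b)]; split; last by rewrite big_seq1.
by move=> ab; rewrite inE => /eqP ->.
Qed.

Lemma mulS_add_closed A B : add_closed (mulS A B).
Proof.
split; first by exists [::]; split=> //; rewrite big_nil.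
move=> _ _ [s [hs ->]] [t [ht ->]]; exists (s ++ t); split; last by rewrite big_cat.
by move=> ab; rewrite mem_cat => /orP [/hs|/ht].
Qed.

Lemma mulS_min A B S : add_closed S -> (forall a b, A a -> B b -> S (a * b)) ->
  subS (mulS A B) S.
Proof.
move=> [S0 SD] hAB _ [s [hs ->]]; elim: s hs => [|ab s IH] hs; first by rewrite big_nil.
rewrite big_cons; apply: SD; last by apply: IH => c hc; apply: hs; rewrite inE hc orbT.
by have [] := hs ab (mem_head _ _); apply: hAB.
Qed.

Lemma mulS_mono A A' B B' : subS A A' -> subS B B' -> subS (mulS A B) (mulS A' B').
Proof.
move=> hA hB; apply: mulS_min; first exact: mulS_add_closed.
by move=> a b /hA ha /hB hb; apply: mulS_mul.
Qed.

Lemma mulS_congr A A' B B' : seteq A A' -> seteq B B' -> seteq (mulS A B) (mulS A' B').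
Proof.
move=> hA hB; apply: subS_anti; apply: mulS_mono; apply: seteq_sub => //; exact: seteq_sym.
Qed.

Lemma mulS_subC A B : subS (mulS A B) (mulS B A).
Proof.
apply: mulS_min; first exact: mulS_add_closed.
by move=> a b ha hb; rewrite mulrC; apply: mulS_mul.
Qed.

Lemma mulSC A B : seteq (mulS A B) (mulS B A).
Proof. by apply: subS_anti; apply: mulS_subC. Qed.

Lemma mulS_scale_add_closed A B a : add_closed (fun x => mulS A B (a * x)).
Proof.
have [h0 hD] := mulS_add_closed A B.
by split=> [|x y hx hy]; rewrite ?mulr0 ?mulrDr //; apply: hD.
Qed.

Lemma mulS_subA A B C : subS (mulS A (mulS B C)) (mulS (mulS A B) C).
Proof.
apply: mulS_min; first exact: mulS_add_closed.
move=> a m ha; move: m; apply: mulS_min; first exact: mulS_scale_add_closed.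
by move=> b c hb hc; rewrite mulrA; apply: mulS_mul => //; apply: mulS_mul.
Qed.

Lemma mulSA A B C : seteq (mulS A (mulS B C)) (mulS (mulS A B) C).
Proof.
apply: subS_anti; first exact: mulS_subA.
by move=> x /mulS_subC /mulS_subA /mulS_subC /mulS_subA /mulS_subC.
Qed.

Lemma mulSACA A B C D :
  seteq (mulS (mulS A B) (mulS C D)) (mulS (mulS A C) (mulS B D)).
Proof.
apply: seteq_trans (seteq_sym (mulSA _ _ _)) _.
apply: seteq_trans (mulS_congr (seteq_refl _) (mulSA _ _ _)) _.
apply: seteq_trans (mulS_congr (seteq_refl _) (mulS_congr (mulSC _ _) (seteq_refl _))) _.
apply: seteq_trans (mulS_congr (seteq_refl _) (seteq_sym (mulSA _ _ _))) _.
exact: mulSA.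
Qed.

Section Subring.
Variable O : lset L.
Hypothesis hO : is_subring O.

Lemma subring1 : O 1. Proof. by case: hO. Qed.

Lemma subring0 : O 0.
Proof. by case: hO => h1 hB _; rewrite -(subrr 1); apply: hB. Qed.

Lemma subringN x : O x -> O (- x).
Proof. by case: hO => _ hB _ hx; rewrite -sub0r; apply: hB => //; apply: subring0. Qed.

Lemma subringB x y : O x -> O y -> O (x - y). Proof. by case: hO => _ hB _; apply: hB. Qed.

Lemma subringD x y : O x -> O y -> O (x + y).
Proof. by move=> hx hy; rewrite -(opprK y); apply: subringB => //; apply: subringN. Qed.

Lemma subringM x y : O x -> O y -> O (x * y). Proof. by case: hO => _ _; apply. Qed.

Lemma subring_zmodule : is_zmodule O.
Proof. by split; [apply: subring0 | apply: subringD | apply: subringN]. Qed.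

Lemma subring_add_closed : add_closed O.
Proof. by split; [apply: subring0 | apply: subringD]. Qed.

Lemma subring_int (z : int) : O z%:~R.
Proof. by apply: zmoduleMz subring_zmodule subring1. Qed.

Lemma subring_module : is_module O O.
Proof. by split; [apply: subring0 | apply: subringD | apply: subringM]. Qed.

Lemma subring_ideal : is_ideal O O.
Proof. by split=> //; apply: subring_module. Qed.

Lemma module_add_closed A : is_module O A -> add_closed A.
Proof. by case. Qed.

Lemma module_mulSr A : is_module O A -> seteq (mulS A O) A.
Proof.
move=> hA; apply: subS_anti.
  apply: mulS_min; first exact: module_add_closed.
  by move=> a r ha hr; rewrite mulrC; case: hA => _ _; apply.
by move=> x hx; rewrite -[x]mulr1; apply: mulS_mul => //; apply: subring1.
Qed.

Lemma module_mulSl A : is_module O A -> seteq (mulS O A) A.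
Proof. by move=> hA; apply: seteq_trans (mulSC _ _) (module_mulSr hA). Qed.

Lemma subring_mulSS : seteq (mulS O O) O.
Proof. exact: module_mulSr subring_module. Qed.

Lemma mulS_module A B : is_module O B -> is_module O (mulS A B).
Proof.
move=> hB; have [h0 hD] := mulS_add_closed A B; split=> // r x hr; move: x.
apply: mulS_min; first exact: mulS_scale_add_closed.
by move=> a b ha hb; rewrite mulrCA; apply: mulS_mul => //; case: hB => _ _; apply.
Qed.

Lemma module_mulS_sub A B : is_module O A -> subS B O -> subS (mulS A B) A.
Proof.
move=> hA hB; apply: mulS_min; first exact: module_add_closed.
by move=> a b ha hb; rewrite mulrC; case: hA => _ _; apply=> //; apply: hB.
Qed.

Lemma ideal_mulS A B : is_ideal O A -> is_ideal O B -> is_ideal O (mulS A B).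
Proof.
move=> [hAO hA] [hBO hB]; split; last exact: mulS_module.
by move=> x /(module_mulS_sub hA hBO) /hAO.
Qed.

Lemma ideal_powS P n : is_ideal O P -> is_ideal O (powS O P n).
Proof.
by move=> hP; elim: n => [|n IH] /=; [apply: subring_ideal | apply: ideal_mulS].
Qed.

Lemma divI_subS A B : is_module O A -> divI O A B -> subS B A.
Proof. by move=> hA [C [[hCO _] hB]] x /hB; apply: module_mulS_sub hA hCO x. Qed.

End Subring.
End SubsetArithmetic.

Section Integrality.
Variable L : fieldExtType rat.
Implicit Types (g : seq L) (S : lset L) (a b x y u w : L).

Definition zspan g (x : L) :=
  exists c : nat -> int, x = \sum_(i < size g) (c i)%:~R * g`_i.

Lemma zspan_zmodule g : is_zmodule (zspan g).
Proof.
split.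
- by exists (fun _ => 0); rewrite big1 // => i _; rewrite mul0r.
- move=> _ _ [c ->] [d ->]; exists (fun i => c i + d i); rewrite -big_split /=.
  by apply: eq_bigr => i _; rewrite rmorphD mulrDl.
- move=> _ [c ->]; exists (fun i => - c i); rewrite -sumrN.
  by apply: eq_bigr => i _; rewrite rmorphN mulNr.
Qed.

Lemma zspan_mem g y : y \in g -> zspan g y.
Proof.
move=> gy; have gi : (index y g < size g)%N by rewrite index_mem.
exists (fun j => (j == index y g)%:Z); rewrite (bigD1 (Ordinal gi)) //= eqxx mul1r.
rewrite big1 ?addr0 ?nth_index // => i /negbTE ne_i.
by rewrite -val_eqE /= in ne_i; rewrite ne_i mul0r.
Qed.

Lemma zspan_min g S : is_zmodule S -> (forall y, y \in g -> S y) -> subS (zspan g) S.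
Proof.
move=> hS gS _ [c ->]; apply: zmodule_sum => // i _.
by rewrite mulrzl; apply: zmoduleMz => //; apply: gS; apply: mem_nth.
Qed.

Lemma zspan_mul g1 g2 u w : zspan g1 u -> zspan g2 w ->
  zspan [seq x * y | x <- g1, y <- g2] (u * w).
Proof.
set g := [seq _ | x <- g1, y <- g2]; have [g0 gD gN] := zspan_zmodule g.
have mulr_closed a : is_zmodule (fun w => zspan g (a * w)).
  by split=> [|x y hx hy|x hx]; rewrite ?mulr0 ?mulrDr ?mulrN //; [apply: gD | apply: gN].
have mull_closed : is_zmodule (fun u => forall w, zspan g2 w -> zspan g (u * w)).
  split=> [v _|x y hx hy v hv|x hx v hv]; rewrite ?mul0r ?mulrDl ?mulNr //.
    by apply: gD; [apply: hx | apply: hy].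
  by apply: gN; apply: hx.
move=> hu; move: w; apply: (zspan_min mull_closed) hu => x gx.
apply: zspan_min (mulr_closed x) _ => y gy; apply: zspan_mem; exact: allpairs_f.
Qed.

(* The determinant trick: x is a root of the characteristic polynomial of the
   integer matrix of multiplication by x on the generators g. *)
Lemma integral_zspan_stable g x : (exists2 i, (i < size g)%N & g`_i != 0) ->
  (forall i, (i < size g)%N -> zspan g (x * g`_i)) -> is_integral x.
Proof.
move=> [i0 gi0 nz_gi0] stable; set n := size g in gi0 stable.
have /fin_all_exists [C hC] : forall i : 'I_n, exists c : nat -> int,
    x * g`_i = \sum_(j < n) (c j)%:~R * g`_j by move=> i; apply: stable.
pose A : 'M[int]_n := \matrix_(i, j) C i j.
exists (char_poly A); split; first exact: char_poly_monic.
rewrite /root (map_char_poly (intr : {rmorphism int -> L})).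
rewrite /char_poly -horner_evalE -det_map_mx; set M := map_mx _ _.
have eM : M = x%:M - map_mx intr A.
  apply/matrixP=> i j; rewrite !mxE /= horner_evalE.
  by rewrite hornerD hornerN hornerMn hornerX hornerC.
pose G : 'cV[L]_n := \col_i g`_i.
have MG0 : M *m G = 0.
  rewrite eM mulmxBl mul_scalar_mx; apply/matrixP=> i j.
  rewrite !mxE (ord1 j) /= hC; apply/eqP; rewrite subr_eq0; apply/eqP.
  by apply: eq_bigr => k _; rewrite !mxE.
have : \adj M *m (M *m G) = 0 by rewrite MG0 mulmx0.
rewrite mulmxA mul_adj_mx mul_scalar_mx => /matrixP /(_ (Ordinal gi0) 0).
by rewrite !mxE => /eqP; rewrite mulf_eq0 (negbTE nz_gi0) orbF.
Qed.

Lemma integral_stabilizer (M : lset L) g x : (forall y, M y <-> zspan g y) ->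
  (exists2 a, M a & a != 0) -> (forall y, M y -> M (x * y)) -> is_integral x.
Proof.
move=> hM [a Ma nz_a] stable; apply: (integral_zspan_stable (g := g)) => [|i ig].
  apply: (contraNP _ nz_a) => none; apply/eqP.
  apply: (zspan_min (S := fun y => y = 0)) (proj1 (hM a) Ma) => [|y /(nthP 0) [i ig <-]].
    by split=> [|? ? -> ->|? ->]; rewrite ?addr0 ?oppr0.
  by apply/eqP; apply: contraT => nz_gi; exfalso; apply: none; exists i.
by apply/hM/stable/hM; apply: zspan_mem; apply: mem_nth.
Qed.

Lemma integral_powers_zspan a : is_integral a -> exists2 m, (0 < m)%N &
  forall i, zspan (mkseq (GRing.exp a) m) (a ^+ i).
Proof.
move=> [P [monP rootP]]; set m := (size P).-1.
have sP : size P = m.+1.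
  rewrite /m prednK // lt0n size_poly_eq0; apply: contraTneq monP => ->.
  by rewrite monicE lead_coef0 eq_sym oner_eq0.
have sPL : size (map_poly (fun z : int => z%:~R) P : {poly L}) = m.+1.
  by rewrite size_map_poly_id0 // (monicP monP) rmorph1 oner_neq0.
have lcP : P`_m = 1 by move: (monicP monP); rewrite lead_coefE sP.
have am : a ^+ m = - \sum_(k < m) (P`_k)%:~R * a ^+ k.
  move: rootP; rewrite /root horner_coef sPL big_ord_recr /= coef_map /= lcP.
  rewrite rmorph1 mul1r addrC addr_eq0 => /eqP ->.
  by congr (- _); apply: eq_bigr => i _; rewrite coef_map.
have m_gt0 : (0 < m)%N.
  by rewrite lt0n; apply: contra_eqN am => /eqP ->; rewrite big_ord0 oppr0 oner_neq0.
set g := mkseq (GRing.exp a) m; have gmem k : (k < m)%N -> zspan g (a ^+ k).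
  by move=> km; apply: zspan_mem; apply/mapP; exists k; rewrite ?mem_iota.
exists m => // i; elim: i {-2}i (leqnn i) => [|i IH] j ji.
  by rewrite leqn0 in ji; rewrite (eqP ji); apply: gmem.
have [jm|mj] := ltnP j m; first exact: gmem.
rewrite -(subnK mj) exprD am mulrN mulr_sumr; have gZ := zspan_zmodule g.
case: (gZ) => _ _ gN; apply: gN; apply: zmodule_sum => // k _.
rewrite mulrCA -exprD mulrzl; apply: zmoduleMz => //; apply: IH.
by rewrite -ltnS (leq_trans _ ji) // -[in X in (_ < X)%N](subnK mj) ltn_add2l.
Qed.

Lemma integral_monomial_stable a b y : is_integral a -> is_integral b ->
  (forall S, is_zmodule S -> (forall i j, S (a ^+ i * b ^+ j)) ->
     forall i j, S (y * (a ^+ i * b ^+ j))) -> is_integral y.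
Proof.
move=> /integral_powers_zspan [m m_gt0 ha] /integral_powers_zspan [n n_gt0 hb] stable.
set g := [seq u * w | u <- mkseq (GRing.exp a) m, w <- mkseq (GRing.exp b) n].
have g_monomials i j : zspan g (a ^+ i * b ^+ j) by apply: zspan_mul.
apply: (integral_zspan_stable (g := g)).
  exists 0%N; first by rewrite size_allpairs !size_mkseq muln_gt0 m_gt0.
  by rewrite /g -(prednK m_gt0) -(prednK n_gt0) /= !expr0 mulr1 oner_neq0.
move=> k /(mem_nth 0) /allpairsP [[u w] [/mapP [i _ ->] /mapP [j _ ->] /= ->]].
exact: stable (zspan_zmodule g) g_monomials i j.
Qed.

Lemma integralB a b : is_integral a -> is_integral b -> is_integral (a - b).
Proof.
move=> ia ib; apply: integral_monomial_stable ia ib _ => S hS mon i j.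
by rewrite mulrBl mulrA -exprS mulrCA -exprS; apply: zmoduleB.
Qed.

Lemma integralM a b : is_integral a -> is_integral b -> is_integral (a * b).
Proof.
move=> ia ib; apply: integral_monomial_stable ia ib _ => S hS mon i j.
by rewrite mulrACA -!exprS.
Qed.

Lemma integral_int (z : int) : is_integral (z%:~R : L).
Proof.
exists ('X - z%:P); split; first exact: monicXsubC.
by rewrite /root rmorphB /= map_polyX map_polyC /= hornerXsubC subrr.
Qed.

End Integrality.

Lemma int_subgroup_principal (I : int -> Prop) : is_zmodule I ->
  exists2 d, I d & forall z, I z -> (d %| z)%Z.
Proof.
move=> hI; have [I0 _ IN] := hI.
have [[w Iw nz_w]|all0] := pselect (exists2 w, I w & w != 0); last first.
  by exists 0 => // z Iz; rewrite dvd0z; apply: contraT => nz_z; case: all0; exists z.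
have Iabs y : I y -> I `|y|%N.
  move=> Iy; have [y_ge0|y_lt0] := lerP 0 y; first by rewrite gez0_abs.
  by rewrite ltz0_abs //; apply: IN.
have [n [n_gt0 In] nmin] : exists2 n, (0 < n)%N /\ I n & forall m, (0 < m)%N /\ I m -> (n <= m)%N.
  by apply: ex_minn_prop; exists `|w|%N; split; [rewrite absz_gt0 | apply: Iabs].
exists n => // y Iy; apply/dvdz_mod0P/eqP; apply: contraT => nz_r.
have r_ge0 : 0 <= (y %% n)%Z by apply: modz_ge0; rewrite eqz_nat -lt0n.
have Ir : I (y %% n)%Z.
  have -> : (y %% n)%Z = y - n%:Z *~ (y %/ n)%Z.
    by move: (divz_eq y n); set q := (y %/ n)%Z; set r := (y %% n)%Z => ->; rewrite mulrzz; ring.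
  by apply: zmoduleB => //; apply: zmoduleMz.
have lt_rn : (`|(y %% n)%Z|%N < n)%N.
  by rewrite -ltz_nat gez0_abs //; apply: ltz_pmod; rewrite ltz_nat.
have : (n <= `|(y %% n)%Z|)%N by apply: nmin; split; [rewrite absz_gt0 | apply: Iabs].
by rewrite leqNgt lt_rn.
Qed.

Lemma rat_subgroup_cyclic (G : rat -> Prop) (N : int) : N != 0 -> is_zmodule G ->
  (forall q, G q -> N%:~R * q \is a Num.int) ->
  exists2 q0, G q0 & forall q, G q -> exists z : int, q = z%:~R * q0.
Proof.
move=> nz_N [G0 GD GN] GZ; have nz_NQ : (N%:~R : rat) != 0 by rewrite intr_eq0.
pose I (z : int) := G (z%:~R / N%:~R).
have [d Id d_dvd] : exists2 d, I d & forall z, I z -> (d %| z)%Z.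
  apply: int_subgroup_principal; split; rewrite /I.
  - by rewrite mul0r.
  - by move=> x y Ix Iy; rewrite rmorphD mulrDl; apply: GD.
  - by move=> x Ix; rewrite rmorphN mulNr; apply: GN.
exists (d%:~R / N%:~R) => // q Gq; have /intrP [z ez] := GZ q Gq.
have qE : q = z%:~R / N%:~R by rewrite -ez mulrC mulKf.
have /dvdzP [c zE] : (d %| z)%Z by apply: d_dvd; rewrite /I -qE.
by exists c; rewrite qE zE rmorphM mulrA.
Qed.

Lemma common_denominator (qs : seq rat) :
  exists2 N : int, N != 0 & forall q, q \in qs -> N%:~R * q \is a Num.int.
Proof.
elim: qs => [|q qs [N nz_N hN]]; first by exists 1.
exists (N * denq q); first by rewrite mulf_neq0 ?denq_neq0.
move=> q'; rewrite inE => /orP [/eqP ->|qs_q'].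
  by rewrite rmorphM -mulrA [_ * q]mulrC -numqE rpredM ?intr_int.
by rewrite rmorphM mulrAC rpredM ?intr_int ?hN.
Qed.

Section FiniteGeneration.
Variable L : fieldExtType rat.
Variables (s : seq L) (M : lset L).
Hypotheses (M_closed : is_zmodule M) (M_sub : subS M (zspan s)).

Let n := \dim {: L}.
Let crd (i : 'I_n) (x : L) : rat := coord (vbasis fullv) i x.
Let Mj (j : nat) (x : L) := M x /\ forall i : 'I_n, (j <= i)%N -> crd i x = 0.

Lemma zspan_bounded_denominators :
  exists2 N : int, N != 0 & forall i x, M x -> N%:~R * crd i x \is a Num.int.
Proof.
have [N nz_N hN] := common_denominator [seq crd i s`_j | i <- enum 'I_n, j <- iota 0 (size s)].
exists N => // i _ /M_sub [c ->]; rewrite /crd linear_sum mulr_sumr rpred_sum // => j _.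
rewrite [(c j)%:~R * _]mulrzl raddfMz mulrzAr rpredMz // hN //.
by apply: (allpairs_f (fun i j => crd i s`_j)); rewrite ?mem_enum ?mem_iota ?add0n ?ltn_ord.
Qed.

Lemma filtration_zmodule j : is_zmodule (Mj j).
Proof.
have [M0 MD MN] := M_closed; split.
- by split=> // i _; rewrite /crd raddf0.
- move=> x y [Mx hx] [My hy]; split; first exact: MD.
  by move=> i ji; rewrite /crd raddfD /= -!/(crd _ _) hx ?hy ?addr0.
- move=> x [Mx hx]; split; first exact: MN.
  by move=> i ji; rewrite /crd raddfN /= -!/(crd _ _) hx ?oppr0.
Qed.

Lemma filtration0 : forall x, Mj 0 x <-> zspan [::] x.
Proof.
move=> x; have [z0 _ _] := zspan_zmodule (L := L) [::].
have [M0 _ _] := filtration_zmodule 0; split.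
  move=> [_ hx]; suff -> : x = 0 by [].
  rewrite (coord_vbasis (memvf x)) big1 // => i _.
  by rewrite -/(crd i x) hx ?scale0r.
by move=> [c ->]; rewrite big_ord0.
Qed.

(* The j-th coordinates of Mj j.+1 form a subgroup of Q with bounded
   denominators, hence a cyclic one; a preimage of its generator is the one
   generator to add. *)
Lemma filtration_step j g : (j < n)%N -> (forall x, Mj j x <-> zspan g x) ->
  exists g', forall x, Mj j.+1 x <-> zspan g' x.
Proof.
move=> jn hg; pose jj := Ordinal jn; have [N nz_N hN] := zspan_bounded_denominators.
have [hZ0 hZD hZN] := filtration_zmodule j.+1.
have [q0 [x0 [Mx0 <-]] gen] : exists2 q0, (exists x, Mj j.+1 x /\ crd jj x = q0) &
    forall q, (exists x, Mj j.+1 x /\ crd jj x = q) -> exists z : int, q = z%:~R * q0.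
  apply: rat_subgroup_cyclic nz_N _ _; last by move=> _ [x [[Mx _] <-]]; apply: hN.
  split; first by exists 0; split=> //; rewrite /crd raddf0.
    by move=> _ _ [x [Mx <-]] [y [My <-]]; exists (x + y); rewrite /crd raddfD; split=> //; apply: hZD.
  by move=> _ [x [Mx <-]]; exists (- x); rewrite /crd raddfN; split=> //; apply: hZN.
exists (x0 :: g) => x; split; last first.
  move: x; apply: zspan_min (filtration_zmodule _) _ => y.
  rewrite inE => /orP [/eqP -> //|].
  by move=> /zspan_mem /hg [My hy]; split=> // i ji; apply: hy; apply: ltnW.
move=> Mx; have [z crd_x] := gen _ (ex_intro _ x (conj Mx erefl)).
have Mjy : Mj j (x - x0 *~ z).
  split; first by apply: zmoduleB M_closed Mx.1 (zmoduleMz _ M_closed Mx0.1).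
  move=> i; rewrite leq_eqVlt => /orP [/eqP ij|ji]; rewrite /crd raddfB raddfMz /=.
    by rewrite -!/(crd _ _) (_ : i = jj) ?crd_x ?mulrzl ?subrr //; apply: val_inj.
  by rewrite -!/(crd _ _) Mx.2 // Mx0.2 // mul0rz subrr.
have [_ gD _] := zspan_zmodule (x0 :: g).
rewrite -(subrK (x0 *~ z) x); apply: gD.
  apply: zspan_min (zspan_zmodule _) _ _ (proj1 (hg _) Mjy) => y gy.
  by apply: zspan_mem; rewrite inE gy orbT.
by apply: zmoduleMz (zspan_zmodule _) _; apply: zspan_mem; rewrite mem_head.
Qed.

Lemma zmodule_fg : exists g, forall x, M x <-> zspan g x.
Proof.
have [g hg] : exists g, forall x, Mj n x <-> zspan g x.
  elim: {1 3}n (leqnn n) => [|j IH] jn; first by exists [::]; apply: filtration0.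
  by have [g hg] := IH (ltnW jn); apply: filtration_step hg.
exists g => x; rewrite -hg; split=> [Mx|[]] //.
by split=> // i; rewrite leqNgt ltn_ord.
Qed.

End FiniteGeneration.

Section IntegerRing.
Variable L : fieldExtType rat.
Variable F : {subfield L}.
Local Notation OFF := (OF (F : {vspace L})).
Local Notation zpoly P := (map_poly (fun z : int => z%:~R) P : {poly L}).

Lemma OK_subring : is_subring (OKset (L := L)).
Proof. by split; [exact: (integral_int L 1) | apply: integralB | apply: integralM]. Qed.

Lemma OF_subring : is_subring OFF.
Proof.
split; first by split; [apply: mem1v | exact: (integral_int L 1)].
  by move=> x y [Fx ix] [Fy iy]; split; [rewrite rpredB | apply: integralB].
by move=> x y [Fx ix] [Fy iy]; split; [rewrite rpredM | apply: integralM].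
Qed.

Lemma subring_horner (O : lset L) (P : {poly int}) a : is_subring O -> O a ->
  O (zpoly P).[a].
Proof.
move=> hO Oa; rewrite horner_coef; apply: zmodule_sum (subring_zmodule hO) _ => i _.
rewrite coef_map /=; apply: subringM (subring_int hO _) _ => //.
by elim: (nat_of_ord i) => [|k IH]; rewrite ?expr0 ?exprS; [apply: subring1 | apply: subringM].
Qed.

Lemma horner_drop1 (P : {poly int}) a :
  (zpoly P).[a] = (P`_0)%:~R + (zpoly (drop_poly 1 P)).[a] * a.
Proof.
have eP : P = (P`_0)%:P + drop_poly 1 P * 'X.
  rewrite -[in LHS](poly_take_drop 1 P) expr1; congr (_ + _).
  by apply/polyP => i; rewrite coef_take_poly coefC; case: i.
by rewrite {1}eP rmorphD rmorphM /= map_polyC map_polyX hornerD hornerC hornerMX.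
Qed.

Lemma root_nonzero_const (P : {poly int}) a : a != 0 -> P != 0 -> root (zpoly P) a ->
  exists2 Q : {poly int}, Q`_0 != 0 & root (zpoly Q) a.
Proof.
move=> nz_a; elim: {P}(size P) {-2}P (leqnn (size P)) => [|n IH] P sP nz_P rootP.
  by move: nz_P; rewrite -size_poly_eq0 -leqn0 sP.
have [P0|nz_P0] := eqVneq (P`_0) 0; last by exists P.
apply: (IH (drop_poly 1 P)); first by rewrite size_drop_poly; lia.
  apply: contra nz_P => /eqP dropP0; rewrite -(poly_take_drop 1 P) dropP0 mul0r addr0.
  by apply/eqP/polyP => i; rewrite coef_take_poly coef0; case: i.
by move: rootP; rewrite /root horner_drop1 P0 add0r mulf_eq0 (negbTE nz_a) orbF.
Qed.

Section PrimeIdeal.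
Variable p : lset L.
Hypothesis hp : is_prime OFF p.

Lemma prime_ideal : is_ideal OFF p. Proof. by case: hp. Qed.
Lemma prime_sub : subS p OFF. Proof. by case: hp => -[]. Qed.
Lemma prime_neq1 : ~ p 1. Proof. by case: hp. Qed.

Lemma prime_mul_or x y : OFF x -> OFF y -> p (x * y) -> p x \/ p y.
Proof. by case: hp => _ _; apply. Qed.

Lemma primeMl r x : OFF r -> p x -> p (r * x).
Proof. by case: prime_ideal => _ [_ _]; apply. Qed.

Lemma prime_zmodule : is_zmodule p.
Proof.
case: prime_ideal => _ [p0 pD _]; split=> // x px.
by rewrite -mulN1r; apply: primeMl px; exact: (subringN OF_subring (subring1 OF_subring)).
Qed.

Lemma prime_int x (z : int) : p x -> p (z%:~R * x).
Proof. by apply: primeMl; exact: subring_int OF_subring z. Qed.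

Lemma prime_int_nonzero : (exists2 a, p a & a != 0) -> exists2 z : int, z != 0 & p z%:~R.
Proof.
move=> [a pa nz_a]; have [Fa [P [monP rootP]]] := prime_sub pa.
have nz_P : P != 0 by apply: contraTneq monP => ->; rewrite monicE lead_coef0 eq_sym oner_eq0.
have [Q nz_Q0 rootQ] := root_nonzero_const nz_a nz_P rootP; exists (Q`_0) => //.
move: rootQ; rewrite /root horner_drop1 addr_eq0 => /eqP ->; rewrite -mulNr.
apply: (primeMl _ pa); apply: (subringN OF_subring); exact: subring_horner OF_subring (prime_sub pa).
Qed.

Hypothesis p_neq0 : exists2 a, p a & a != 0.

Lemma prime_above_prime : exists2 l : nat, prime l & p l%:R.
Proof.
have [z nz_z pz] := prime_int_nonzero p_neq0.
have p_absz : p `|z|%:R.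
  rewrite -[_%:R]/((Posz `|z|)%:~R); have [z_ge0|z_lt0] := lerP 0 z; first by rewrite gez0_abs.
  by rewrite ltz0_abs // rmorphN; case: prime_zmodule => _ _; apply.
have [n [n_gt0 pn] nmin] : exists2 n, (0 < n)%N /\ p n%:R & forall m, (0 < m)%N /\ p m%:R -> (n <= m)%N.
  by apply: ex_minn_prop; exists `|z|%N; rewrite absz_gt0.
have OFnat m : OFF m%:R by apply: (subring_int OF_subring m).
exists n => //; apply/primeP; split.
  by rewrite ltn_neqAle n_gt0 andbT; apply/eqP => n1; apply: prime_neq1; move: pn; rewrite -n1.
move=> d /dvdnP [k nE]; have pkd : p (k%:R * d%:R) by rewrite -natrM -nE.
have [k_gt0 d_gt0] : (0 < k)%N /\ (0 < d)%N by move: n_gt0; rewrite nE muln_gt0 => /andP.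
have [pk|pd] := prime_mul_or (OFnat k) (OFnat d) pkd.
  by have := nmin k (conj k_gt0 pk); rewrite nE => le_n; apply/orP; left; apply/eqP; nia.
by have := nmin d (conj d_gt0 pd); rewrite nE => le_n; apply/orP; right; apply/eqP; nia.
Qed.

Lemma prime_const_notin a : OFF a -> ~ p a ->
  exists2 Q : {poly int}, ~ p (Q`_0)%:~R & p (zpoly Q).[a].
Proof.
move=> OFa npa; have [_ [P [monP rootP]]] := OFa.
suff shift i : forall Q : {poly int}, ~ p (Q`_i)%:~R -> p (zpoly Q).[a] ->
    exists2 Q : {poly int}, ~ p (Q`_0)%:~R & p (zpoly Q).[a].
  apply: (shift (size P).-1 P); first by rewrite -lead_coefE (monicP monP) rmorph1; apply: prime_neq1.
  by rewrite (eqP rootP); case: prime_ideal => _ [].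
elim: i => [|i IH] Q nQi pQ; first by exists Q.
have [pQ0|] := pselect (p (Q`_0)%:~R); last by exists Q.
apply: (IH (drop_poly 1 Q)); first by rewrite coef_drop_poly addn1.
have pDa : p ((zpoly (drop_poly 1 Q)).[a] * a).
  rewrite [X in p X](_ : _ = (zpoly Q).[a] - (Q`_0)%:~R); last first.
    by rewrite [(zpoly Q).[a]]horner_drop1 addrAC subrr add0r.
  exact: zmoduleB prime_zmodule pQ pQ0.
by have [|//] := prime_mul_or (subring_horner _ OF_subring OFa) OFa pDa.
Qed.

Lemma prime_maximal a : OFF a -> ~ p a -> exists2 b, OFF b & p (a * b - 1).
Proof.
move=> OFa npa; have [l l_prime pl] := prime_above_prime.
have [Q nQ0 pQa] := prime_const_notin OFa npa.
have l_ndvd : ~~ (l%:Z %| Q`_0)%Z.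
  by apply: contra_notN nQ0 => /dvdzP [c ->]; rewrite rmorphM /=; apply: prime_int.
have [u [v uv]] := Bezoutz (Q`_0) l.
have {}uv : u * Q`_0 + v * l = 1.
  by rewrite uv; apply/eqP; rewrite -/(coprimez _ _) coprimezE /= coprime_sym prime_coprime.
set D := (zpoly (drop_poly 1 Q)).[a].
exists (- (u%:~R * D)).
  apply: (subringN OF_subring); apply: (subringM OF_subring (subring_int OF_subring _)).
  exact: subring_horner OF_subring OFa.
have e1 : u%:~R * (Q`_0)%:~R + v%:~R * l%:R = 1 :> L.
  by rewrite -[l%:R]/((l%:Z)%:~R : L) -!intrM -intrD uv.
have -> : a * - (u%:~R * D) - 1 = (- u)%:~R * (zpoly Q).[a] + (- v)%:~R * l%:R.
  transitivity ((- u)%:~R * (zpoly Q).[a] + (- v)%:~R * l%:R + (u%:~R * (Q`_0)%:~R + v%:~R * l%:R - 1)).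
    by rewrite horner_drop1 -/D !mulrNz; ring.
  by rewrite e1 subrr addr0.
by case: prime_zmodule => _ pD _; apply: pD; apply: prime_int.
Qed.

End PrimeIdeal.
End IntegerRing.

Section PrimeInverse.
Variable L : fieldExtType rat.
Variable F : {subfield L}.
Local Notation OFF := (OF (F : {vspace L})).
Implicit Types (I J p q : lset L) (ps : seq (lset L)) (x y z : L).

Lemma natr_fieldExt_neq0 (n : nat) : (0 < n)%N -> (n%:R : L) != 0.
Proof. by move=> n_gt0; rewrite -(rmorph_nat (in_alg L)) fmorph_eq0 pnatr_eq0 -lt0n. Qed.

Definition fg_submodules (O : lset L) :=
  forall M, is_zmodule M -> subS M O -> exists g, forall x, M x <-> zspan g x.

Definition nat_ideal (l : nat) : lset L := fun x => exists2 r, OFF r & x = l%:R * r.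

Lemma nat_ideal_ideal l : is_ideal OFF (nat_ideal l).
Proof.
have hO := OF_subring F.
split=> [_ [r Or ->]|]; first exact (subringM hO (subring_int hO l) Or).
split.
- by exists 0; [apply: subring0 | rewrite mulr0].
- by move=> _ _ [r Or ->] [s Os ->]; exists (r + s); [apply: subringD | rewrite mulrDr].
- by move=> t _ Ot [r Or ->]; exists (t * r); [apply: subringM | rewrite mulrCA].
Qed.

Definition adjoin I x : lset L := fun z => exists i r, [/\ I i, OFF r & z = i + x * r].

Lemma adjoin_ideal I x : is_ideal OFF I -> OFF x -> is_ideal OFF (adjoin I x).
Proof.
move=> [IO [I0 ID IM]] Ox; have hO := OF_subring F.
split=> [_ [i [r [Ii Or ->]]]|]; first exact (subringD hO (IO _ Ii) (subringM hO Ox Or)).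
split.
- by exists 0, 0; split=> //; [apply: subring0 | rewrite mulr0 addr0].
- move=> _ _ [i [r [Ii Or ->]]] [j [s [Ij Os ->]]]; exists (i + j), (r + s).
  by split; [apply: ID | apply: subringD | rewrite mulrDr addrACA].
- move=> t _ Ot [i [r [Ii Or ->]]]; exists (t * i), (t * r).
  by split; [apply: IM | apply: subringM | rewrite mulrDr mulrCA].
Qed.

Lemma adjoin_subS I x : is_ideal OFF I -> subS I (adjoin I x).
Proof.
by move=> hI i Ii; exists i, 0; split=> //; [apply: subring0 (OF_subring F) | rewrite mulr0 addr0].
Qed.

Lemma adjoin_mem I x : is_ideal OFF I -> adjoin I x x.
Proof.
by case=> _ [I0 _ _]; exists 0, 1; split=> //; [apply: subring1 (OF_subring F) | rewrite mulr1 add0r].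
Qed.

Lemma adjoin_mulS_sub I x y : is_ideal OFF I -> OFF x -> OFF y -> I (x * y) ->
  subS (mulS (adjoin I x) (adjoin I y)) I.
Proof.
move=> hI Ox Oy Ixy; have [IO [I0 ID IM]] := hI; have hO := OF_subring F.
apply: mulS_min; first by split.
move=> _ _ [i [r [Ii Or ->]]] [j [s [Ij Os ->]]].
have -> : (i + x * r) * (j + y * s) = (j + y * s) * i + (r * x) * j + (r * s) * (x * y).
  by ring.
apply: (ID); first apply: (ID).
- by apply: IM => //; exact (subringD hO (IO _ Ij) (subringM hO Oy Os)).
- by apply: IM => //; exact (subringM hO Or Ox).
- by apply: IM => //; exact (subringM hO Or Os).
Qed.

Section Residues.
Variable gO : seq L.
Hypothesis hgO : forall x, OFF x <-> zspan gO x.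
Variable l : nat.
Hypothesis l_gt0 : (0 < l)%N.

Definition residue (c : {ffun 'I_(size gO) -> 'I_l}) : L := \sum_(i < size gO) (c i)%:R * gO`_i.

Definition residue_count I := #|[set c | `[< I (residue c) >]]|.

Lemma residue_exists x : OFF x -> exists c, nat_ideal l (x - residue c).
Proof.
move=> /hgO [c ->]; have l_neq0 : l%:Z != 0 by rewrite eqz_nat -lt0n.
have mod_ge0 i : 0 <= (c i %% l)%Z by apply: modz_ge0.
have mod_lt i : (`|(c i %% l)%Z| < l)%N.
  by rewrite -ltz_nat gez0_abs //; apply: ltz_pmod; rewrite ltz_nat.
exists [ffun i : 'I_(size gO) => Ordinal (mod_lt i)].
exists (\sum_(i < size gO) (c i %/ l)%Z%:~R * gO`_i).
  apply: zmodule_sum (subring_zmodule (OF_subring F)) _ => i _.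
  by apply: (subringM (OF_subring F) (subring_int (OF_subring F) _)); apply/hgO/zspan_mem/mem_nth.
rewrite /residue -sumrB mulr_sumr; apply: eq_bigr => i _; rewrite ffunE /=.
rewrite -[_%:R]/((Posz `|(c i %% l)%Z|)%:~R) gez0_abs // {1}(divz_eq (c i) l).
by rewrite intrD intrM mulrDl addrK mulrA [_ * l%:R]mulrC.
Qed.

Lemma residue_count_lt I J x : is_ideal OFF I -> is_ideal OFF J ->
  subS (nat_ideal l) I -> subS I J -> J x -> ~ I x -> (residue_count I < residue_count J)%N.
Proof.
move=> [_ [_ ID IM]] [JO [_ JD JM]] lI IJ Jx nIx; apply: proper_card; apply/properP; split.
  by apply/subsetP => c; rewrite !inE => /asboolP /IJ /asboolP.
have [c lc] := residue_exists (JO _ Jx); exists c; rewrite !inE; apply/asboolP.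
  have -> : residue c = x + (-1) * (x - residue c) by rewrite mulN1r opprB addrC subrK.
  apply: JD => //; apply: JM (IJ _ (lI _ lc)).
  exact (subringN (OF_subring F) (subring1 (OF_subring F))).
move=> Ic; apply: nIx; rewrite -(subrK (residue c) x); apply: ID => //; exact: lI.
Qed.

End Residues.

Definition prodI ps := foldr (@mulS L) OFF ps.

Lemma prodI_ideal ps : List.Forall (is_ideal OFF) ps -> is_ideal OFF (prodI ps).
Proof.
elim=> [|q {}ps hq _ IH] /=; first exact: subring_ideal (OF_subring F).
exact (ideal_mulS hq IH).
Qed.

Lemma prodI_cat ps1 ps2 : subS (prodI (ps1 ++ ps2)) (mulS (prodI ps1) (prodI ps2)).
Proof.
elim: ps1 => [|q ps1 IH] /= x.
  by move=> hx; rewrite -[x]mul1r; apply: mulS_mul => //; apply: subring1 (OF_subring F).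
by move=> hx; apply: mulS_subA; move: x hx; apply: mulS_mono.
Qed.

Lemma prodI_insert ps1 q ps2 b y : prodI (ps1 ++ ps2) b -> q y ->
  prodI (ps1 ++ q :: ps2) (b * y).
Proof.
move=> hb qy; elim: ps1 b hb => [|r ps1 IH] b /= hb; first by rewrite mulrC; apply: mulS_mul.
have closed : add_closed (fun b => mulS r (prodI (ps1 ++ q :: ps2)) (b * y)).
  have [h0 hD] := mulS_add_closed r (prodI (ps1 ++ q :: ps2)).
  by split=> [|u v hu hv]; rewrite ?mul0r ?mulrDl //; apply: hD.
move: b hb; apply: mulS_min closed _ => u w ru hw.
by rewrite -mulrA; apply: mulS_mul => //; apply: IH.
Qed.

Definition prime_above (l : nat) q := is_prime OFF q /\ subS (nat_ideal l) q.

(* Induction on the number of residues of O_F modulo l lying outside I. *)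
Lemma prime_product_sub gO l I : (forall x, OFF x <-> zspan gO x) -> (0 < l)%N ->
  is_ideal OFF I -> subS (nat_ideal l) I ->
  exists ps, List.Forall (prime_above l) ps /\ subS (prodI ps) I.
Proof.
move=> hgO l_gt0; set B := #|{ffun 'I_(size gO) -> 'I_l}|.
suff: forall k I, (B - residue_count gO l I < k)%N -> is_ideal OFF I -> subS (nat_ideal l) I ->
    exists ps, List.Forall (prime_above l) ps /\ subS (prodI ps) I by apply.
elim=> // k IH {}I lt_k hI lI.
have [I1|nI1] := pselect (I 1).
  by exists [::]; split=> // x Ox; rewrite -[x]mulr1; case: hI => _ [_ _]; apply.
have [pI|npI] := pselect (is_prime OFF I).
  exists [:: I]; split; first by apply: List.Forall_cons.
  exact: module_mulS_sub hI.2 (fun _ h => h).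
have [x [y [Ox Oy Ixy nIx nIy]]] : exists x y, [/\ OFF x, OFF y, I (x * y), ~ I x & ~ I y].
  apply: contrapT => none; apply: npI; split=> // a b Oa Ob Iab.
  by apply: contrapT => /not_orP [nIa nIb]; apply: none; exists a, b.
have adjoin_product z : OFF z -> ~ I z ->
    exists ps, List.Forall (prime_above l) ps /\ subS (prodI ps) (adjoin I z).
  move=> Oz nIz; have hIz := adjoin_ideal hI Oz.
  have := residue_count_lt hgO l_gt0 hI hIz lI (adjoin_subS z hI) (adjoin_mem z hI) nIz.
  have : (residue_count gO l (adjoin I z) <= B)%N := max_card _.
  move=> le_B lt_count; apply: IH => //; first lia.
  by move=> w /lI /(adjoin_subS z hI).
have [ps1 [aps1 sub1]] := adjoin_product x Ox nIx.
have [ps2 [aps2 sub2]] := adjoin_product y Oy nIy.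
exists (ps1 ++ ps2); split; first exact/List.Forall_app.
by move=> w /prodI_cat /(mulS_mono sub1 sub2); apply: adjoin_mulS_sub.
Qed.

Lemma prime_sub_prodI p ps : is_prime OFF p -> List.Forall (is_ideal OFF) ps ->
  subS (prodI ps) p -> exists ps1 q ps2, ps = ps1 ++ q :: ps2 /\ subS q p.
Proof.
move=> hp; elim=> [|q {}ps hq hps IH] /= sub_p.
  by case: (prime_neq1 hp); apply: sub_p; apply: subring1 (OF_subring F).
have [qp|nqp] := pselect (subS q p); first by exists [::], q, ps.
have [a qa npa] : exists2 a, q a & ~ p a.
  by apply: contrapT => none; apply: nqp => z qz; apply: contrapT => npz; apply: none; exists z.
have [ps1 [r [ps2 [-> rp]]]] : exists ps1 r ps2, ps = ps1 ++ r :: ps2 /\ subS r p.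
  apply: IH => z hz; have paz : p (a * z) by apply: sub_p; apply: mulS_mul.
  by case: (prime_mul_or hp (hq.1 _ qa) ((prodI_ideal hps).1 _ hz) paz).
by exists (q :: ps1), r, ps2.
Qed.

Lemma prime_maximal_subS p q : is_prime OFF p -> is_prime OFF q ->
  (exists2 a, q a & a != 0) -> subS q p -> subS p q.
Proof.
move=> hp hq q_neq0 qp z pz; apply: contrapT => nqz.
have [b Ob qb] := prime_maximal hq q_neq0 (prime_sub hp pz) nqz.
apply: (prime_neq1 hp); rewrite -(subKr (z * b) 1).
apply: zmoduleB (prime_zmodule hp) _ (qp _ qb).
by rewrite mulrC; exact (primeMl hp Ob pz).
Qed.

(* In a shortest product of primes above l contained in l O_F some factor lies
   in p, hence equals p; an element b of the product of the other factors not
   in l O_F gives x = b / l. *)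
Lemma prime_inverse_nontrivial p : fg_submodules OFF -> is_prime OFF p ->
  (exists2 a, p a & a != 0) -> exists x, [/\ x \in F, ~ OFF x & forall y, p y -> OFF (x * y)].
Proof.
move=> hfg hp p_neq0; have [gO hgO] := hfg _ (subring_zmodule (OF_subring F)) (fun _ h => h).
have [l l_prime pl] := prime_above_prime hp p_neq0; have l_gt0 := prime_gt0 l_prime.
have lp : subS (nat_ideal l) p by move=> _ [r Or ->]; rewrite mulrC; exact (primeMl hp Or pl).
have [m [ps [size_ps aps sps]] min_m] : exists2 m, exists ps, [/\ size ps = m,
    List.Forall (prime_above l) ps & subS (prodI ps) (nat_ideal l)] &
    forall k, (exists ps, [/\ size ps = k, List.Forall (prime_above l) ps
      & subS (prodI ps) (nat_ideal l)]) -> (m <= k)%N.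
  apply: ex_minn_prop; have [ps [aps sps]] := prime_product_sub hgO l_gt0 (nat_ideal_ideal l) (fun _ h => h).
  by exists (size ps), ps.
have above_ideal q : prime_above l q -> is_ideal OFF q by case=> [[]].
have ips := List.Forall_impl _ above_ideal aps.
have [ps1 [q [ps2 [eps qp]]]] := prime_sub_prodI hp ips (fun z hz => lp z (sps z hz)).
move: aps; rewrite eps => /List.Forall_app [aps1 /List.Forall_cons_iff [[hq lq] aps2]].
have pq : subS p q.
  apply: prime_maximal_subS hp hq _ qp; exists (l%:R * 1); last by rewrite mulr1 natr_fieldExt_neq0.
  by apply: lq; exists 1 => //; apply: subring1 (OF_subring F).
have [b prod_b nlb] : exists2 b, prodI (ps1 ++ ps2) b & ~ nat_ideal l b.
  apply: contrapT => none; suff : (m <= size (ps1 ++ ps2))%N by rewrite -size_ps eps !size_cat /=; lia.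
  apply: min_m; exists (ps1 ++ ps2); split=> //; first exact/List.Forall_app.
  by move=> z hz; apply: contrapT => nz; apply: none; exists z.
have Ob : OFF b.
  have ips12 := List.Forall_impl _ above_ideal (proj2 (List.Forall_app _ _ _) (conj aps1 aps2)).
  exact: (prodI_ideal ips12).1 _ prod_b.
have nz_l := natr_fieldExt_neq0 l_gt0.
exists (b / l%:R); split.
- by rewrite rpredM ?rpredV ?rpred_nat //; case: Ob.
- by move=> Obl; apply: nlb; exists (b / l%:R); rewrite // mulrC divfK.
- move=> y py; have [r Or e] : nat_ideal l (b * y).
    by apply: sps; rewrite eps; apply: prodI_insert => //; apply: pq.
  by rewrite mulrAC e mulrAC divff // mul1r.
Qed.

Lemma invS_module I : is_module OFF (invS F OFF I).
Proof.
have hO := OF_subring F; split.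
- by split=> [|y _]; [apply: rpred0 | rewrite mul0r; apply: subring0 hO].
- move=> u v [Fu hu] [Fv hv]; split=> [|y Iy]; first by rewrite rpredD.
  by rewrite mulrDl; exact (subringD hO (hu _ Iy) (hv _ Iy)).
- move=> r u Or [Fu hu]; split=> [|y Iy]; first by rewrite rpredM //; case: Or.
  by rewrite -mulrA; exact (subringM hO Or (hu _ Iy)).
Qed.

(* If p p^-1 were contained in p, the element x of prime_inverse_nontrivial
   would stabilise the finitely generated p, hence be integral. *)
Lemma prime_invertible p : fg_submodules OFF -> is_prime OFF p ->
  (exists2 a, p a & a != 0) -> seteq (mulS p (invS F OFF p)) OFF.
Proof.
move=> hfg hp p_neq0; set pinv := invS F OFF p; have hO := OF_subring F.
have sub_OF : subS (mulS p pinv) OFF.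
  by apply: mulS_min (subring_add_closed hO) _ => a u pa [_ hu]; rewrite mulrC; apply: hu.
have hM : is_module OFF (mulS p pinv) := mulS_module p (invS_module p).
apply: subS_anti => // z Oz.
have [w [pw npw]] : exists w, mulS p pinv w /\ ~ p w.
  apply: contrapT => none; have [x [Fx nOx xp]] := prime_inverse_nontrivial hfg hp p_neq0.
  apply: nOx; split=> //; have [gp hgp] := hfg p (prime_zmodule hp) (prime_sub hp).
  apply: integral_stabilizer hgp p_neq0 _ => y py; apply: contrapT => nxy; apply: none.
  by exists (x * y); split=> //; rewrite mulrC; apply: mulS_mul.
have [b Ob pb] := prime_maximal hp p_neq0 (sub_OF _ pw) npw.
have [_ MD MM] := hM; have pinv1 : pinv 1.
  by split=> [|y /(prime_sub hp)]; [apply: mem1v | rewrite mul1r].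
have M1 : mulS p pinv 1.
  have -> : (1 : L) = b * w + (-1) * ((w * b - 1) * 1) by ring.
  apply: (MD); first exact: (MM _ _ Ob pw).
  exact: (MM _ _ (subringN hO (subring1 hO)) (mulS_mul pb pinv1)).
by rewrite -[z]mulr1; apply: (MM _ _ Oz M1).
Qed.

End PrimeInverse.

Section PrimePowers.
Variable L : fieldExtType rat.
Variable F : {subfield L}.
Local Notation OFF := (OF (F : {vspace L})).
Variable p : lset L.
Hypothesis p_ideal : is_ideal OFF p.
Local Notation P := (powS OFF p).

Lemma powS_ideal n : is_ideal OFF (P n).
Proof. exact (ideal_powS (OF_subring F) n p_ideal). Qed.

Lemma powSS_subS n : subS (P n.+1) p.
Proof. exact: module_mulS_sub p_ideal.2 (powS_ideal n).1. Qed.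

(* If p were zero, so would be v, and then p^(e+1) would divide v. *)
Lemma pval_neq0 v e : is_ideal OFF v -> pval OFF p v e -> subS v p ->
  exists2 a, p a & a != 0.
Proof.
move=> [_ [v0 _ _]] [_ ndvd] vp; apply: contrapT => p_eq0; apply: ndvd.
have in0 A : subS A p -> subS A (fun x => x = 0).
  by move=> Ap x /Ap px; apply: contrapT => nz_x; apply: p_eq0; exists x => //; apply/eqP.
have zero_closed : add_closed (fun x : L => x = 0) by split=> // x y -> ->; rewrite addr0.
exists OFF; split; first exact: subring_ideal (OF_subring F).
move=> x; split=> [/(in0 _ vp) ->|hx]; first by case: (mulS_add_closed (P e.+1) OFF).
suff -> : x = 0 by [].
by apply: (mulS_min zero_closed _ hx) => a b /(in0 _ (@powSS_subS e)) -> _; rewrite mul0r.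
Qed.

Section Invertible.
Hypothesis p_inv : seteq (mulS p (invS F OFF p)) OFF.
Local Notation Q := (powS OFF (invS F OFF p)).

Lemma powS_mul_inv n : seteq (mulS (P n) (Q n)) OFF.
Proof.
elim: n => [|n IH] /=; first exact: subring_mulSS (OF_subring F).
apply: seteq_trans (mulSACA _ _ _ _) _.
apply: seteq_trans (mulS_congr p_inv IH) _; exact: subring_mulSS (OF_subring F).
Qed.

Lemma powSD a b : seteq (P (a + b)) (mulS (P a) (P b)).
Proof.
elim: a => [|a IH] /=.
  exact (seteq_sym (module_mulSl (OF_subring F) (powS_ideal b).2)).
apply: seteq_trans (mulS_congr (seteq_refl _) IH) _; exact: mulSA.
Qed.

Lemma powS_subS a b : (a <= b)%N -> subS (P b) (P a).
Proof.
move=> le_ab x; rewrite -(subnKC le_ab) => /(seteq_sub (powSD _ _)).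
exact: module_mulS_sub (powS_ideal a).2 (powS_ideal _).1 x.
Qed.

Lemma powS_invK n X : is_ideal OFF X -> seteq (mulS (Q n) (mulS (P n) X)) X.
Proof.
move=> hX; apply: seteq_trans (mulSA _ _ _) _.
apply: seteq_trans (mulS_congr (mulSC _ _) (seteq_refl _)) _.
apply: seteq_trans (mulS_congr (powS_mul_inv n) (seteq_refl _)) _.
exact (module_mulSl (OF_subring F) hX.2).
Qed.

Lemma subS_divI n I : is_ideal OFF I -> subS I (P n) -> divI OFF (P n) I.
Proof.
move=> hI IP; exists (mulS (Q n) I); split.
  split; last exact: mulS_module hI.2.
  move=> x hx; apply: (seteq_sub (powS_mul_inv n)); apply: mulS_subC.
  by move: x hx; apply: mulS_mono.
apply: seteq_sym; apply: seteq_trans (mulSA _ _ _) _.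
apply: seteq_trans (mulS_congr (powS_mul_inv n) (seteq_refl _)) _.
exact (module_mulSl (OF_subring F) hI.2).
Qed.

Lemma pval_le k v e : is_ideal OFF v -> divI OFF (P k) v -> pval OFF p v e -> (k <= e)%N.
Proof.
move=> hv pk_v [_ ndvd]; rewrite leqNgt; apply/negP => lt_ek; apply: ndvd.
apply: subS_divI hv _ => x /(divI_subS (powS_ideal k).2 pk_v); exact: powS_subS.
Qed.

Hypothesis hp : is_prime OFF p.

Lemma powS_cancel_coprime f t C : is_ideal OFF f -> ~ subS f p -> is_ideal OFF C ->
  subS (mulS f C) (P t) -> subS C (P t).
Proof.
move=> hf nfp; elim: t C => [|t IH] C hC fC_sub; first by case: hC.
have [a fa npa] : exists2 a, f a & ~ p a.
  by apply: contrapT => none; apply: nfp => z fz; apply: contrapT => npz; apply: none; exists z.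
have Cp : subS C (P 1).
  move=> c Cc; rewrite -[c]mulr1; apply: mulS_mul; last exact: subring1 (OF_subring F).
  have : p (a * c) by apply: (@powSS_subS t); apply: fC_sub; apply: mulS_mul.
  by case/(prime_mul_or hp) => //; [exact: hf.1 | exact: hC.1].
have [C' [hC' eC]] := subS_divI hC Cp.
have fC'_sub : subS (mulS f C') (P t).
  move=> x /(seteq_sub (seteq_sym (powS_invK 1 (ideal_mulS hf hC')))) hx.
  apply: (seteq_sub (powS_invK 1 (powS_ideal t))); move: x hx; apply: mulS_mono => // y.
  move=> /mulS_subA /(mulS_mono (@mulS_subC _ _ _) (fun _ h => h)).
  move=> /(seteq_sub (seteq_sym (mulSA _ _ _))) hy; apply: (seteq_sub (powSD 1 t)).
  by apply: fC_sub; move: hy; apply: mulS_mono => // z /(seteq_sub (seteq_sym eC)).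
move=> c /(seteq_sub eC) hc; apply: (seteq_sub (seteq_sym (powSD 1 t))).
by move: hc; apply: mulS_mono => //; exact: IH hC' fC'_sub.
Qed.

Lemma not_divI_powS f k : is_ideal OFF f -> ~ divI OFF (P k) f ->
  exists j f', [/\ (j < k)%N, is_ideal OFF f', ~ subS f' p & seteq f (mulS (P j) f')].
Proof.
move=> hf ndvd; have nfk : ~ subS f (P k) by move=> fk; apply: ndvd; apply: subS_divI.
have [m nfm min_m] := ex_minn_prop (ex_intro (fun m => ~ subS f (P m)) k nfk).
have le_mk : (m <= k)%N by apply: min_m.
case: m nfm min_m le_mk => [|j] nfj min_j lt_jk; first by case: nfj; case: hf.
have fj : subS f (P j) by apply: contrapT => nfj'; have := min_j _ nfj'; rewrite ltnn.
have [f' [hf' ef]] := subS_divI hf fj; exists j, f'; split=> // f'p; apply: nfj.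
move=> x /(seteq_sub ef) hx /=; apply: mulS_subC; move: x hx; apply: mulS_mono => //.
Qed.

Lemma inv_powS_mul_subS f C v k e : is_ideal OFF f -> is_ideal OFF C ->
  seteq v (mulS f C) -> subS v (P e) -> ~ divI OFF (P k) f -> (k <= e)%N ->
  subS (mulS (Q (e - k).+1) v) f.
Proof.
move=> hf hC ev ve ndvd le_ke.
have [j [f' [lt_jk hf' nf'p ef]]] := not_divI_powS hf ndvd.
have hf'C := ideal_mulS hf' hC.
have f'C_sub : subS (mulS f' C) (P (e - j)).
  move=> x /(seteq_sub (seteq_sym (powS_invK j hf'C))) hx.
  apply: (seteq_sub (powS_invK j (powS_ideal (e - j)))); move: x hx; apply: mulS_mono => // y.
  move=> /mulS_subA hy; apply: (seteq_sub (powSD j (e - j))).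
  rewrite subnKC; last by lia.
  apply: ve; apply: (seteq_sub (seteq_sym ev)); move: y hy; apply: mulS_mono => //.
  exact: seteq_sub (seteq_sym ef).
have CP : subS C (P (e - k).+1).
  move=> c /(powS_cancel_coprime hf' nf'p hC f'C_sub); apply: powS_subS; lia.
have QC_sub : subS (mulS (Q (e - k).+1) C) OFF.
  by move=> y /(mulS_mono (fun _ h => h) CP) /mulS_subC; apply: (seteq_sub (powS_mul_inv _)).
move=> x /(mulS_mono (fun _ h => h) (seteq_sub ev)) /mulS_subA.
move=> /(mulS_mono (@mulS_subC _ _ _) (fun _ h => h)) /(seteq_sub (seteq_sym (mulSA _ _ _))).
exact: module_mulS_sub hf.2 QC_sub x.
Qed.

End Invertible.
End PrimePowers.

Section RelationsExtend.
Variable L : fieldExtType rat.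
Variables O1 O2 : lset L.
Hypotheses (hO1 : is_subring O1) (hO2 : is_subring O2) (O12 : subS O1 O2).

Definition relprod (O : lset L) (R : seq (lset L)) := foldr (@mulS L) O [seq mulS a O | a <- R].

Lemma mulS_subring_ext : seteq (mulS O1 O2) O2.
Proof.
apply: subS_anti; last by move=> y O2y; rewrite -[y]mul1r; apply: mulS_mul => //; apply: subring1.
apply: mulS_min (subring_add_closed hO2) _ => a b /O12 O2a O2b; exact: subringM.
Qed.

Lemma mulS_ext A : seteq (mulS (mulS A O1) O2) (mulS A O2).
Proof.
apply: seteq_trans (seteq_sym (mulSA _ _ _)) _.
exact: mulS_congr (seteq_refl _) mulS_subring_ext.
Qed.

Lemma relprod_ext R : seteq (mulS (relprod O1 R) O2) (relprod O2 R).
Proof.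
elim: R => [|a R IH] /=; first exact: mulS_subring_ext.
apply: seteq_trans (mulS_congr (seteq_refl _) (seteq_sym (subring_mulSS hO2))) _.
apply: seteq_trans (mulSACA _ _ _ _) _; exact: mulS_congr (mulS_ext a) IH.
Qed.

Lemma principal_ext x : seteq (mulS (fun y => exists z, O1 z /\ y = x * z) O2)
  (fun y => exists z, O2 z /\ y = x * z).
Proof.
apply: subS_anti; last first.
  move=> _ [z [O2z ->]]; have -> : x * z = (x * 1) * z by rewrite mulr1.
  by apply: mulS_mul O2z; exists 1; split; [apply: subring1 |].
apply: mulS_min => [|_ w [z [O1z ->]] O2w].
  split; first by exists 0; split; [apply: subring0 | rewrite mulr0].
  move=> _ _ [z [O2z ->]] [z' [O2z' ->]]; exists (z + z').
  by split; [apply: subringD | rewrite mulrDr].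
by exists (z * w); split; [apply: subringM => //; apply: O12 | rewrite mulrA].
Qed.

Lemma rel_holds_ext R : rel_holds O1 R -> rel_holds O2 R.
Proof.
move=> [x [nz_x hx]]; exists x; split=> //.
apply: seteq_trans (seteq_sym (relprod_ext R)) _.
exact: seteq_trans (mulS_congr hx (seteq_refl _)) (principal_ext x).
Qed.

End RelationsExtend.

Section OrdersOverOF.
Variable L : fieldExtType rat.
Variable F : {subfield L}.
Local Notation OFF := (OF (F : {vspace L})).

Lemma OF_fg pi : is_order (OFpi F pi) -> fg_submodules OFF.
Proof.
move=> [_ [s [hs _]]] M hM MO; apply: zmodule_fg hM _ => x /MO Ox.
have : OFpi F pi x.
  by exists [:: x]; split=> [c|]; [rewrite inE => /eqP -> | rewrite big_ord1 /= expr0 mulr1].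
by move=> /hs [c [_ ->]]; exists (fun i => c`_i).
Qed.

Lemma Ord_subring f : is_ideal OFF f -> is_subring (Ord F f).
Proof.
move=> hf; have hO := OF_subring F; have hOK := OK_subring L.
have fOK_sub : subS (mulS f (OKset (L := L))) (OKset (L := L)).
  by apply: mulS_min (subring_add_closed hOK) _ => a b /hf.1 [_ ia] ib; exact: subringM.
have [M0 MD MM] := mulS_module f (subring_module hOK).
split.
- by exists 1, 0; split; [apply: subring1 | split=> //; rewrite addr0].
- move=> _ _ [a [b [Oa [Mb ->]]]] [a' [b' [Oa' [Mb' ->]]]].
  exists (a - a'), (b + (-1) * b'); split; first exact (subringB hO Oa Oa').
  split; last by rewrite mulN1r opprD addrACA.
  by apply: (MD) => //; apply: (MM) => //; exact (subringN hOK (subring1 hOK)).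
- move=> _ _ [a [b [Oa [Mb ->]]]] [a' [b' [Oa' [Mb' ->]]]].
  exists (a * a'), (a * b' + b * a' + b' * b); split; first exact (subringM hO Oa Oa').
  split; last by ring.
  apply: (MD); first apply: (MD).
  + by apply: (MM) => //; case: Oa.
  + by rewrite mulrC; apply: (MM) => //; case: Oa'.
  + by apply: (MM) => //; apply: fOK_sub.
Qed.

Lemma Ord_subS f g : subS f g -> subS (Ord F f) (Ord F g).
Proof.
move=> fg _ [a [b [Oa [fb ->]]]]; exists a, b; split=> //; split=> //.
by move: b fb; apply: mulS_mono.
Qed.

End OrdersOverOF.

Lemma powZ_neg (L : fieldExtType rat) (E : {vspace L}) (O A : lset L) (k e : nat) :
  (k <= e)%N -> powZ E O A (k%:Z - 1 - e%:Z) = powS O (invS E O A) (e - k).+1.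
Proof. by move=> le_ke; have -> : k%:Z - 1 - e%:Z = Negz (e - k) by rewrite NegzE; lia. Qed.

Theorem mainTheorem3 (L : fieldExtType rat) (F : {subfield L}) (pi : L)
  (hCM : CM_with_max_real F)
  (hgen : <<1%VS; pi>>%VS = fullv)
  (hord : is_order (OFpi F pi))
  (v : lset L) (hv : is_ideal (OF F) v)
  (hvf : divI (OF F) v (condplus F (OFpi F pi)))
  (p : lset L) (hp : is_prime (OF F) p) (k : nat) (hk : (1 <= k)%N)
  (hpk : divI (OF F) (powS (OF F) p k) v)
  (e : nat) (he : pval (OF F) p v e)
  (R : seq (lset L)) (hR : forall i, (i < size R)%N -> inv_ideal (OFpi F pi) (nth (fun _ => False) R i))
  (h1 : rel_holds (Ord F (mulS (powZ F (OF F) p (k%:Z - 1 - e%:Z)) v)) R)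
  (h2 : ~ rel_holds (Ord F (powS (OF F) p k)) R) :
  forall f : lset L, is_ideal (OF F) f -> divI (OF F) f v ->
    (divI (OF F) (powS (OF F) p k) f <-> ~ rel_holds (Ord F f) R).
Proof.
move=> f hf [C [hC eC]]; have p_ideal := prime_ideal hp.
have v_pk : subS v (powS (OF F) p k) := divI_subS (powS_ideal p_ideal k).2 hpk.
have v_p : subS v p by move=> x /v_pk; rewrite -(prednK hk); apply: (powSS_subS p_ideal).
have p_inv := prime_invertible (OF_fg hord) hp (pval_neq0 p_ideal hv he v_p).
have le_ke := pval_le p_ideal p_inv hv hpk he.
have v_pe : subS v (powS (OF F) p e) := divI_subS (powS_ideal p_ideal e).2 he.1.
split=> [pk_f holds|not_holds].
  apply: h2; apply: (rel_holds_ext (Ord_subring hf) (Ord_subring (powS_ideal p_ideal k))) holds.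
  exact/Ord_subS/(divI_subS (powS_ideal p_ideal k).2 pk_f).
apply: contrapT => not_pk_f; apply: not_holds; rewrite powZ_neg // in h1.
have sub_f := inv_powS_mul_subS p_ideal p_inv hp hf hC eC v_pe not_pk_f le_ke.
have hQv : is_ideal (OF F) (mulS (powS (OF F) (invS F (OF F) p) (e - k).+1) v).
  by split; [move=> x /sub_f /hf.1 | apply: mulS_module hv.2].
exact: (rel_holds_ext (Ord_subring hQv) (Ord_subring hf) (Ord_subS sub_f)) h1.
Qed.
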